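(* Fix integers $N\ge 2$ and $K\ge 1$. The class $M^{\text{TransE}}$ is not universal, i.e. $\pi(\mathcal{M}^{\text{TransE}})\ne\pi(\mathbb{R}^{N\times N\times K})$.
   Context: There are $N$ entities and $K$ relations. A score-based model assigns a score $s_k(i,j)\in\mathbb{R}$ to each triple, $i,j\in\{1,\dots,N\}$, $k\in\{1,\dots,K\}$; its scoring tensor $\mathcal{S}\in\mathbb{R}^{N\times N\times K}$ has frontal slices $\mathbf{S}_k$ with $[\mathbf{S}_k]_{ij}=s_k(i,j)$. For a real $N\times N$ matrix $\mathbf{S}$, $\pi(\mathbf{S})$ is the matrix of dense ranks: $\pi_{ij}(\mathbf{S})=1+$ (number of distinct values among entries of $\mathbf{S}$ strictly larger than $s_{ij}$). For tensors, $\pi$ acts slicewise; for a set $X$, $\pi(X)=\{\pi(x):x\in X\}$; thus $\pi(\mathbb{R}^{N\times N\times K})$ is the set of all ranking tensors. TransE of size $r$: parameters $\mathbf{A}\in\mathbb{R}^{N\times r}$ (rows $\mathbf{a}_i$), $\mathbf{R}\in\mathbb{R}^{K\times r}$ (rows $\mathbf{r}_k$), score $-\|\mathbf{a}_i+\mathbf{r}_k-\mathbf{a}_j\|_2^2$. $\mathcal{M}^{\text{TransE}}$ is the set of scoring tensors of all TransE models of all sizes $r\in\mathbb{N}^+$. A class is universal if it can represent every ranking tensor. *)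

From mathcomp Require Import all_boot all_order all_algebra.
From mathcomp Require Import reals.
Set Implicit Arguments. Unset Strict Implicit. Unset Printing Implicit Defensive.
Import Order.TTheory GRing.Theory Num.Theory.
Local Open Scope ring_scope.

(* A scoring tensor S in R^{N x N x K}: S i j k = s_k(i,j). *)
Definition tensor (R : realType) (N K : nat) := 'I_N -> 'I_N -> 'I_K -> R.

Definition rtensor (N K : nat) := 'I_N -> 'I_N -> 'I_K -> nat.

Definition dense_rank (R : realType) (N : nat) (M : 'I_N -> 'I_N -> R)
    (i j : 'I_N) : nat :=
  (size (undup [seq M p.1 p.2 | p : 'I_N * 'I_N <-
                   [seq q <- enum {: 'I_N * 'I_N} | (M i j < M q.1 q.2)%R]])).+1%N.

Definition pi_tensor (R : realType) (N K : nat) (S : tensor R N K) : rtensor N K :=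
  fun i j k => dense_rank (fun a b => S a b k) i j.

Definition pi_set (R : realType) (N K : nat) (X : tensor R N K -> Prop)
    : rtensor N K -> Prop :=
  fun P => exists S, X S /\ pi_tensor S = P.

Definition transE_score (R : realType) (N K r : nat)
    (A : 'M[R]_(N, r)) (Rl : 'M[R]_(K, r)) : tensor R N K :=
  fun i j k => - \sum_(l < r) (A i l + Rl k l - A j l) ^+ 2.

Definition M_TransE (R : realType) (N K : nat) : tensor R N K -> Prop :=
  fun S => exists r : nat, (0 < r)%N /\
             exists (A : 'M[R]_(N, r)) (Rl : 'M[R]_(K, r)), S = transE_score A Rl.

Definition all_tensors (R : realType) (N K : nat) : tensor R N K -> Prop :=
  fun _ => True.

(* Every TransE score of a self-loop is [- ||r_k||^2], independent of the entity, so in every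
   slice of a TransE scoring tensor all diagonal entries share one dense rank.  A tensor whose
   only nonzero entry is a single diagonal [1] gives that entry rank 1 and every other diagonal
   entry rank 2, so its ranking tensor is not realised by TransE. *)
From mathcomp Require Import all_boot all_order all_algebra.
From mathcomp Require Import reals.
Set Implicit Arguments. Unset Strict Implicit. Unset Printing Implicit Defensive.
Import Order.TTheory GRing.Theory Num.Theory.
Local Open Scope ring_scope.

Section DenseRank.

Variables (R : realType) (N : nat) (M : 'I_N -> 'I_N -> R).

Lemma dense_rank_max (i j : 'I_N) :
  (forall p q, M p q <= M i j) -> dense_rank M i j = 1%N.
Proof.
move=> Mmax; rewrite /dense_rank.
have /eq_filter -> : (fun q : 'I_N * 'I_N => M i j < M q.1 q.2) =1 pred0.
  by move=> [p q] /=; rewrite ltNge Mmax.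
by rewrite filter_pred0.
Qed.

Lemma dense_rank_gt1 (i j p q : 'I_N) : M i j < M p q -> (1 < dense_rank M i j)%N.
Proof.
move=> ltMpq; rewrite /dense_rank ltnS lt0n size_eq0.
apply/eqP => /(congr1 (fun s => M p q \in s)).
rewrite in_nil mem_undup => /mapP; apply; exists (p, q) => //.
by rewrite mem_filter mem_enum andbT.
Qed.

End DenseRank.

Lemma transE_score_diag (R : realType) (N K r : nat)
    (A : 'M[R]_(N, r)) (Rl : 'M[R]_(K, r)) (i : 'I_N) (k : 'I_K) :
  transE_score A Rl i i k = - \sum_(l < r) Rl k l ^+ 2.
Proof. by congr (- _); apply: eq_bigr => l _; rewrite addrAC subrr add0r. Qed.

Lemma pi_M_TransE_diag (R : realType) (N K : nat) (S : tensor R N K) (i j : 'I_N) (k : 'I_K) :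
  M_TransE S -> pi_tensor S i i k = pi_tensor S j j k.
Proof.
move=> [r [_ [A [Rl ->]]]].
by rewrite /pi_tensor /dense_rank !transE_score_diag.
Qed.

Definition point_tensor (R : realType) (N K : nat) (i0 : 'I_N) : tensor R N K :=
  fun i j _ => ((i == i0) && (j == i0))%:R.

Lemma pi_point_tensor_diag_neq (R : realType) (N K : nat) (i0 i1 : 'I_N) (k : 'I_K) :
  i1 != i0 ->
  pi_tensor (point_tensor R i0) i0 i0 k != pi_tensor (point_tensor R i0) i1 i1 k.
Proof.
move=> ne10; rewrite /pi_tensor dense_rank_max => [|p q]; last first.
  by rewrite /point_tensor !eqxx ler_nat leq_b1.
rewrite neq_ltn (@dense_rank_gt1 _ _ _ _ _ i0 i0) //.
by rewrite /point_tensor (negbTE ne10) !eqxx ltr01.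
Qed.

Theorem corollary2 (R : realType) (N K : nat) (hN : (2 <= N)%N) (hK : (1 <= K)%N) :
  @pi_set R N K (@M_TransE R N K) <> @pi_set R N K (@all_tensors R N K).
Proof.
pose i0 : 'I_N := Ordinal (ltnW hN).
pose i1 : 'I_N := Ordinal hN.
pose k0 : 'I_K := Ordinal hK.
have ne10 : i1 != i0 by [].
move=> pi_eq.
have : pi_set (@all_tensors R N K) (pi_tensor (point_tensor R i0)).
  by exists (point_tensor R i0).
rewrite -pi_eq => -[S [TransE_S piS]].
move: (pi_point_tensor_diag_neq R k0 ne10); rewrite -piS.
by rewrite (pi_M_TransE_diag i0 i1 k0 TransE_S) eqxx.
Qed.
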